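(* Let $n,\ell$ be positive integers and $0<\epsilon<0.5$. Let $\boldsymbol{c}\in\mathbb{Z}_2^n$ be ''0''-$3$-dominant and $\ell$-run-length limited, and let $\boldsymbol{d}\in\mathbb{Z}_2^n$ be $\epsilon$-balanced. Then the DNA sequence $\tau^{-1}(\boldsymbol{c}\|\boldsymbol{d})$ is $3$-SSA, $\ell$-run-length limited and GC-$\epsilon$-balanced.
   Context: $\Sigma_{\rm DNA}=\{\mathrm{A},\mathrm{T},\mathrm{C},\mathrm{G}\}$ with complement $\overline{\mathrm A}=\mathrm T$, $\overline{\mathrm T}=\mathrm A$, $\overline{\mathrm C}=\mathrm G$, $\overline{\mathrm G}=\mathrm C$; the reverse-complement of $(x_1,\dots,x_n)$ is $(\overline{x_n},\dots,\overline{x_1})$. A DNA sequence is $m$-SSA if it has no two non-overlapping blocks of consecutive symbols of length $\ge m$ that are reverse-complements of each other. A binary sequence is ''0''-$m$-dominant if every block of $m$ consecutive symbols contains more than $m/2$ zeros. A sequence is $\ell$-run-length limited if every maximal run of identical consecutive symbols has length at most $\ell$. A binary $\boldsymbol{d}\in\mathbb{Z}_2^n$ is $\epsilon$-balanced if $|\mathrm{wt}(\boldsymbol{d})/n-0.5|\le\epsilon$ (Hamming weight). For $\boldsymbol{x}\in\Sigma_{\rm DNA}^n$, $\mathrm{wt}_{\rm GC}(\boldsymbol{x})$ is the number of positions equal to G or C, and $\boldsymbol{x}$ is GC-$\epsilon$-balanced if $|\mathrm{wt}_{\rm GC}(\boldsymbol{x})/n-0.5|\le\epsilon$. $\tau(\mathrm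 T)=00$, $\tau(\mathrm C)=01$, $\tau(\mathrm A)=10$, $\tau(\mathrm G)=11$, extended symbolwise; for $\boldsymbol{x},\boldsymbol{y}\in\mathbb{Z}_2^n$, $\boldsymbol{x}\|\boldsymbol{y}=(x_1y_1,\dots,x_ny_n)$. *)

From HB Require Import structures.
From mathcomp Require Import all_boot all_order all_algebra.
Set Implicit Arguments. Unset Strict Implicit. Unset Printing Implicit Defensive.
Import Order.TTheory GRing.Theory Num.Theory.

Inductive nucleotide := NA | NT | NC | NG.

Definition nuc_code (x : nucleotide) : nat :=
  match x with NA => 0 | NT => 1 | NC => 2 | NG => 3 end.
Definition nuc_decode (n : nat) : option nucleotide :=
  match n with 0 => Some NA | 1 => Some NT | 2 => Some NC | 3 => Some NG | _ => None end.
Lemma nuc_codeK : pcancel nuc_code nuc_decode. Proof. by case. Qed.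
HB.instance Definition _ := Countable.copy nucleotide (pcan_type nuc_codeK).
Definition nuc_enum := [:: NA; NT; NC; NG].
Lemma nuc_enumP : Finite.axiom nuc_enum. Proof. by case. Qed.
HB.instance Definition _ := isFinite.Build nucleotide nuc_enumP.

Definition comp (x : nucleotide) : nucleotide :=
  match x with NA => NT | NT => NA | NC => NG | NG => NC end.

Definition revcomp (s : seq nucleotide) : seq nucleotide := rev (map comp s).

Definition block {X : Type} (s : seq X) (i k : nat) : seq X := take k (drop i s).

Definition SSA (m : nat) (x : seq nucleotide) : Prop :=
  forall i j k, m <= k -> i + k <= size x -> j + k <= size x ->
    (i + k <= j \/ j + k <= i) ->
    block x i k <> revcomp (block x j k).

(* binary sequences: Z_2 represented by bool, 1 = true, 0 = false *)
Definition zero_dominant (m : nat) (c : seq bool) : Prop :=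
  forall i, i + m <= size c -> m < 2 * count (fun b => b == false) (block c i m).

(* A run is x[i..i+k) (k > 0) with all symbols equal;
   it is maximal if it cannot be extended to the left or to the right. *)
Definition rll {X : eqType} (l : nat) (s : seq X) : Prop :=
  forall (x0 : X) (i k : nat), 0 < k -> i + k <= size s ->
    (forall j, i <= j < i + k -> nth x0 s j = nth x0 s i) ->
    (i = 0 \/ nth x0 s i.-1 != nth x0 s i) ->
    (i + k = size s \/ nth x0 s (i + k) != nth x0 s i) ->
    k <= l.

Definition wt (d : seq bool) : nat := count id d.

Local Open Scope ring_scope.
Definition balanced (R : realFieldType) (eps : R) (d : seq bool) : Prop :=
  `| (wt d)%:R / (size d)%:R - 2^-1 | <= eps.

Definition wt_GC (x : seq nucleotide) : nat := count (fun a => (a == NG) || (a == NC)) x.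
Definition GC_balanced (R : realFieldType) (eps : R) (x : seq nucleotide) : Prop :=
  `| (wt_GC x)%:R / (size x)%:R - 2^-1 | <= eps.
Local Close Scope ring_scope.

Definition tau (x : nucleotide) : bool * bool :=
  match x with NT => (false, false) | NC => (false, true)
             | NA => (true, false) | NG => (true, true) end.
Definition tau_inv (p : bool * bool) : nucleotide :=
  match p with (false, false) => NT | (false, true) => NC
             | (true, false) => NA | (true, true) => NG end.
Lemma tau_invK : cancel tau tau_inv. Proof. by case. Qed.
Lemma tauK : cancel tau_inv tau. Proof. by case=> [[] []]. Qed.

Definition interleave (c d : seq bool) : seq (bool * bool) := zip c d.

Definition tau_inv_seq (s : seq (bool * bool)) : seq nucleotide := map tau_inv s.

From Pilot Require Import Defs.
From mathcomp Require Import all_boot all_order all_algebra.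
From mathcomp Require Import zify.
Import Order.TTheory GRing.Theory Num.Theory.

(* Proof of Lemma 4.  Write x = tau^{-1}(c || d); then c is the sequence of
   first bits of tau over x and d the sequence of second bits.  The three
   properties of x are inherited from c and d, each through a general fact:
   - Run lengths: tau is symbolwise, so every run of x is a constant block of
     c; and in an l-run-length limited sequence every constant block (maximal
     or not) has length at most l, by extending it to a maximal run.
   - 3-SSA: complementing a nucleotide flips its first bit, so two
     reverse-complementary blocks of x of length k >= 3 give two length-3
     blocks of c, one equal to the reversed bitwise negation of the other.
     Both contain at least two zeros by 0-3-dominance, but the zeros of one
     are the ones of the other: 2 + 2 <= 3 is absurd.
   - GC balance: a nucleotide is G or C exactly when its second bit is 1, so
     wt_GC x = wt d and size x = size d. *)

Section RunLength.
Variables (X : eqType) (l : nat) (s : seq X).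
Hypothesis s_rll : rll l s.

(* Every constant block of an l-run-length limited sequence, maximal or not,
   has length at most l: it extends to a maximal run, bounded by definition.
   The induction is on size s - k, which decreases as the block grows. *)
Lemma rll_const (x0 : X) i k : 0 < k -> i + k <= size s ->
  (forall j, i <= j < i + k -> nth x0 s j = nth x0 s i) -> k <= l.
Proof.
move Em : (size s - k) => m; elim/ltn_ind: m i k Em => m IH i k Em k0 ik const.
have longer i' : i' + k.+1 <= size s ->
    (forall j, i' <= j < i' + k.+1 -> nth x0 s j = nth x0 s i') -> k <= l.
  by move=> ik' const'; apply/ltnW/(IH (size s - k.+1) _ i' k.+1) => //; lia.
have [left_max|] := boolP ((i == 0) || (nth x0 s i.-1 != nth x0 s i)); last first.
  rewrite negb_or negbK => /andP[i_pos /eqP left_eq].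
  apply: (longer i.-1); first by lia.
  move=> j /andP[ij jk]; rewrite left_eq.
  have [-> // | j_neq] := eqVneq j i.-1.
  by apply: const; lia.
have [right_max|] :=
  boolP ((i + k == size s) || (nth x0 s (i + k) != nth x0 s i)); last first.
  rewrite negb_or negbK => /andP[right_lt /eqP right_eq].
  have ik' : i + k.+1 <= size s by rewrite addnS ltn_neqAle right_lt ik.
  apply: (longer i ik') => j /andP[ij]; rewrite addnS ltnS leq_eqVlt.
  by case/orP=> [/eqP -> // | jk]; apply: const; rewrite ij jk.
apply: (s_rll x0 i k) => //.
- by case/orP: left_max => [/eqP|]; [left|right].
- by case/orP: right_max => [/eqP|]; [left|right].
Qed.

End RunLength.

Arguments rll_const {X l s}.

(* Run-length limitation is reflected by symbolwise maps: a run of s is a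
   constant block of map f s. *)
Lemma rll_map {X Y : eqType} (f : X -> Y) (l : nat) (s : seq X) :
  rll l (map f s) -> rll l s.
Proof.
move=> fs_rll x0 i k k0 ik const _ _.
apply: (rll_const fs_rll (f x0) i k k0); rewrite ?size_map // => j jik.
by rewrite !(nth_map x0) ?const //; lia.
Qed.

Lemma block_map {X Y : Type} (f : X -> Y) (s : seq X) i k :
  block (map f s) i k = map f (block s i k).
Proof. by rewrite /block -map_drop -map_take. Qed.

Lemma tau_inv_seq_fst (c d : seq bool) : size c = size d ->
  map (fun a => (tau a).1) (tau_inv_seq (interleave c d)) = c.
Proof.
move=> sz; rewrite /tau_inv_seq /interleave -map_comp.
rewrite (eq_map (g := fst)); last by move=> p /=; rewrite tauK.
by apply: unzip1_zip; rewrite sz.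
Qed.

Lemma tau_inv_seq_snd (c d : seq bool) : size c = size d ->
  map (fun a => (tau a).2) (tau_inv_seq (interleave c d)) = d.
Proof.
move=> sz; rewrite /tau_inv_seq /interleave -map_comp.
rewrite (eq_map (g := snd)); last by move=> p /=; rewrite tauK.
by apply: unzip2_zip; rewrite sz.
Qed.

Lemma tau_comp_fst (a : nucleotide) : (tau (Defs.comp a)).1 = ~~ (tau a).1.
Proof. by case: a. Qed.

Lemma tau_GC (a : nucleotide) : (a == NG) || (a == NC) = (tau a).2.
Proof. by case: a. Qed.

(* Two length-3 binary words each with a majority of zeros cannot be
   reversed negations of each other: negation swaps zeros and ones. *)
Lemma dominant3_not_revneg {u v : seq bool} : size v = 3 ->
  3 < 2 * count (fun b => b == false) u ->
  3 < 2 * count (fun b => b == false) v ->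
  u <> rev (map negb v).
Proof.
move=> sv du dv eu; move: du; rewrite eu count_rev count_map.
have -> : count (preim negb (fun b => b == false)) v = count id v.
  by apply: eq_count => -[].
have := count_predC (fun b => b == false) v.
have -> : count (predC (fun b => b == false)) v = count id v.
  by apply: eq_count => -[].
by rewrite sv; lia.
Qed.

(* A DNA sequence whose first-bit sequence is "0"-3-dominant is 3-SSA: the
   first 3 symbols of one block and the last 3 of its reverse complement
   would violate dominant3_not_revneg. *)
Lemma SSA3_of_fst_dominant (x : seq nucleotide) :
  zero_dominant 3 (map (fun a => (tau a).1) x) -> SSA 3 x.
Proof.
set c := map _ x => c_dom i j k k3 ik jk _ E.
have sc : size c = size x by rewrite size_map.
have blocks : block c i k = rev (map negb (block c j k)).
  rewrite !block_map E /revcomp map_rev -!map_comp.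
  by congr (rev _); apply: eq_map => a /=; rewrite tau_comp_fst.
have head3 : block c i 3 = take 3 (block c i k) by rewrite /block take_takel.
have tail3 : block c (j + (k - 3)) 3 = drop (k - 3) (block c j k).
  by rewrite /block addnC -drop_drop take_drop subnKC.
have size_tail : size (block c (j + (k - 3)) 3) = 3.
  by rewrite /block size_takel // size_drop; lia.
have dom_i := c_dom i ltac:(lia).
have dom_j := c_dom (j + (k - 3)) ltac:(lia).
apply: (dominant3_not_revneg size_tail dom_i dom_j).
rewrite head3 blocks take_rev size_map tail3 map_drop.
by rewrite /block size_takel ?size_drop //; lia.
Qed.

Theorem lemma4 (R : realFieldType) (n l : nat) (eps : R)
  (c d : seq bool) :
  (0 < n)%N -> (0 < l)%N -> (0 < eps)%R -> (eps < 2^-1)%R ->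
  size c = n -> size d = n ->
  zero_dominant 3 c -> rll l c -> balanced eps d ->
  let x := tau_inv_seq (interleave c d) in
  SSA 3 x /\ rll l x /\ GC_balanced eps x.
Proof.
move=> _ _ _ _ sc sd c_dom c_rll d_bal x.
have scd : size c = size d by rewrite sc sd.
have x_fst : map (fun a => (tau a).1) x = c by apply: tau_inv_seq_fst.
have x_snd : map (fun a => (tau a).2) x = d by apply: tau_inv_seq_snd.
split; last split.
- by apply: SSA3_of_fst_dominant; rewrite x_fst.
- by apply: (rll_map (fun a => (tau a).1)); rewrite x_fst.
- have size_x : size x = size d by rewrite -x_snd size_map.
  have wt_x : wt_GC x = wt d.
    by rewrite -x_snd /wt /wt_GC count_map; apply: eq_count => a; apply: tau_GC.
  by rewrite /GC_balanced wt_x size_x.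
Qed.
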